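(* For every OCAPT $\mathcal A=(Q,T,\delta,X)$ with initial state $q_0\in Q$ and target set $F\subseteq Q$ there is an alternating two-way automaton $\mathcal T$ over the alphabet $\Sigma=X\cup\{\square\}$ with $|\mathcal T|=|\mathcal A|^{\mathcal O(1)}$ such that for every parameter word $w\in W_X$: $w\in L(\mathcal T)$ if and only if all infinite $V_w$-runs of $\mathcal A$ starting from $(q_0,0)$ visit $F$ only finitely many times.
   Context: An OCAPT is $\mathcal A=(Q,T,\delta,X)$ with finite state set $Q$, finite parameter set $X$, transitions $T\subseteq Q\times Q$, and $\delta:T\to Op$ where $Op$ consists of updates $+a$ with $a\in\{-1,0,1\}$, the zero test $=0$, and parametric tests $=x$, $\ge x$; no parametric updates. For $V:X\to\mathbb{N}$, a $V$-run is a sequence of configurations $(q_i,c_i)\in Q\times\mathbb{N}$ with $(q_i,q_{i+1})\in T$, tests satisfied with unchanged counter, and updates applied. A parameter word is an infinite word $w=a_0a_1a_2\dots$ over $\Sigma=X\cup\{\square\}$ with $a_0=\square$ and such that each $x\in X$ occurs at exactly one position; $W_X$ is the set of parameter words. It determines $V_w(x)=$ the number of occurrences of $\square$ among $a_1\dots a_i$, where $a_i=x$. An alternating two-way automaton (A2A) is $\mathcal T=(S,\Sigma,s_{in},\Delta,S_f)$ with finite state set $S$, initial state $s_{in}$, accepting states $S_f\subseteq S$, and $\Delta\subseteq S\times(\Sigma\cup\{\mathrm{first?}\})\times\mathbb B^+(S\times\{+1,0,-1\})$, where $\mathbb B^+(Y)$ is the set of positive Boolean formulas over $Y$ (including true and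 false), and $Y'\subseteq Y$ satisfies $\beta$ if $\beta$ evaluates to true when elements of $Y'$ are set true and the rest false. A run tree on $w$ from $n$ is a rooted tree labelled by $S\times\mathbb{N}$ with root $(s_{in},n)$ such that for each vertex $(s,m)$ with children $(s_1,n_1),\dots,(s_k,n_k)$ there is $(s,\sigma,\beta)\in\Delta$ with $\{(s_1,n_1-m),\dots,(s_k,n_k-m)\}$ satisfying $\beta$, where $\sigma=\mathrm{first?}$ requires $m=0$ and $\sigma\in\Sigma$ requires $a_m=\sigma$. It is accepting if every infinite branch has infinitely many labels in $S_f\times\mathbb{N}$. $L(\mathcal T)$ is the set of infinite words having an accepting run tree from $0$. *)

From mathcomp Require Import all_boot.
Set Implicit Arguments. Unset Strict Implicit. Unset Printing Implicit Defensive.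

Inductive upd := UDec | UNop | UInc.

Inductive op (X : Type) :=
  | OAdd of upd
  | OZero
  | OEqP of X
  | OGeP of X.

Record ocapt (Q X : finType) := OCAPT {
  otrans : {set Q * Q};
  odelta : Q * Q -> op X           (* δ : T -> Op (only used on T) *)
}.

Definition ocapt_size (Q X : finType) (A : ocapt Q X) : nat :=
  #|Q| + #|otrans A| + #|X|.

Definition ostep (Q X : finType) (A : ocapt Q X) (V : X -> nat)
  (qc qc' : Q * nat) : Prop :=
  let: (q, c) := qc in let: (q', c') := qc' in
  (q, q') \in otrans A /\
  match odelta A (q, q') with
  | OAdd UDec => c' + 1 = c
  | OAdd UNop => c' = c
  | OAdd UInc => c' = c + 1
  | OZero => c = 0 /\ c' = c
  | OEqP x => c = V x /\ c' = c
  | OGeP x => V x <= c /\ c' = c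
  end.

Definition inf_run (Q X : finType) (A : ocapt Q X) (V : X -> nat)
  (q0 : Q) (r : nat -> Q * nat) : Prop :=
  r 0 = (q0, 0) /\ forall i, ostep A V (r i) (r i.+1).

Definition visits_finitely (Q : finType) (F : {set Q}) (r : nat -> Q * nat) : Prop :=
  exists N, forall i, N <= i -> (r i).1 \notin F.

(* alphabet Σ = X ∪ {□}, encoded as option X with None = □ *)
Definition pword (X : Type) := nat -> option X.

Definition is_param_word (X : finType) (w : pword X) : Prop :=
  w 0 = None /\ forall x : X, exists! i, w i = Some x.

Definition nboxes (X : Type) (w : pword X) (i : nat) : nat :=
  \sum_(1 <= j < i.+1) (if w j is None then 1 else 0).

Definition is_Vw (X : finType) (w : pword X) (V : X -> nat) : Prop :=
  forall x i, w i = Some x -> V x = nboxes w i.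

Inductive dir := DLeft | DStay | DRight.

Inductive bform (S : Type) :=
  | BTrue | BFalse
  | BAtom of S & dir
  | BAnd of bform S & bform S
  | BOr of bform S & bform S.

Fixpoint bform_size (S : Type) (f : bform S) : nat :=
  match f with
  | BTrue | BFalse | BAtom _ _ => 1
  | BAnd f g | BOr f g => (bform_size f + bform_size g).+1
  end.

Fixpoint bsat (S : Type) (P : S -> dir -> Prop) (f : bform S) : Prop :=
  match f with
  | BTrue => True
  | BFalse => False
  | BAtom s d => P s d
  | BAnd f g => bsat P f /\ bsat P g
  | BOr f g => bsat P f \/ bsat P g
  end.

(* transition labels: a letter of Σ, or the test first? *)
Inductive tlabel (X : Type) := TLetter of option X | TFirst.

Record a2a (S X : finType) := A2A {
  a_init  : S;
  a_delta : seq (S * tlabel X * bform S);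
  a_acc   : {set S}
}.

Definition a2a_size (S X : finType) (T : a2a S X) : nat :=
  #|S| + \sum_(t <- a_delta T) (bform_size t.2).+1.

Fixpoint InSeq (A : Type) (x : A) (s : seq A) : Prop :=
  match s with
  | [::] => False
  | y :: s' => y = x \/ InSeq x s'
  end.

Definition moved (m : nat) (d : dir) (n : nat) : Prop :=
  match d with
  | DLeft => n.+1 = m
  | DStay => n = m
  | DRight => n = m.+1
  end.

(* Run trees: nodes are finite sequences of child indices, stored in
   reverse order (child i of node v is i :: v); ar v is the number of
   children of v and lab v its label in S × ℕ. *)
Fixpoint valid_node (ar : seq nat -> nat) (v : seq nat) : bool :=
  match v with
  | [::] => true
  | i :: v' => (i < ar v') && valid_node ar v'
  end.

Definition label_ok (X : Type) (w : pword X) (m : nat) (l : tlabel X) : Prop :=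
  match l with
  | TLetter a => w m = a
  | TFirst => m = 0
  end.

Definition local_ok (S X : finType) (T : a2a S X) (w : pword X)
  (ar : seq nat -> nat) (lab : seq nat -> S * nat) (v : seq nat) : Prop :=
  let: (s, m) := lab v in
  exists2 t, InSeq t (a_delta T) &
    [/\ t.1.1 = s, label_ok w m t.1.2,
        forall i, i < ar v -> exists d, moved m d (lab (i :: v)).2
      & bsat (fun s' d => exists i, [/\ i < ar v, (lab (i :: v)).1 = s'
                                      & moved m d (lab (i :: v)).2]) t.2].

Fixpoint branch_pref (b : nat -> nat) (k : nat) : seq nat :=
  match k with
  | 0 => [::]
  | k'.+1 => b k' :: branch_pref b k'
  end.

Definition is_branch (ar : seq nat -> nat) (b : nat -> nat) : Prop :=
  forall k, b k < ar (branch_pref b k).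

Definition accepting_tree (S : finType) (acc : {set S})
  (ar : seq nat -> nat) (lab : seq nat -> S * nat) : Prop :=
  forall b, is_branch ar b ->
    forall N, exists2 k, N <= k & (lab (branch_pref b k)).1 \in acc.

Definition run_tree (S X : finType) (T : a2a S X) (w : pword X) (n : nat)
  (ar : seq nat -> nat) (lab : seq nat -> S * nat) : Prop :=
  lab [::] = (a_init T, n) /\ forall v, valid_node ar v -> local_ok T w ar lab v.

Definition a2a_accepts (S X : finType) (T : a2a S X) (w : pword X) : Prop :=
  exists ar lab, run_tree T w 0 ar lab /\ accepting_tree (a_acc T) ar lab.

From mathcomp Require Import all_boot zify.
From Stdlib Require Import Classical ClassicalEpsilon.
Set Implicit Arguments. Unset Strict Implicit. Unset Printing Implicit Defensive.

(* An alternating automaton all of whose states are accepting accepts w iff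
   its initial configuration is not [refuted], i.e. not in the least set of
   configurations closed under "every enabled transition is forced into the
   set".  It therefore suffices to build an automaton whose refuted
   configurations are exactly the true facts about Buchi runs of the OCAPT.

   A run from (q0, 0) visiting F infinitely often exists iff some reachable
   configuration (q, c) starts either a well-nested cycle through F returning
   to (q, c) with the counter never below c, or a cycle through F from (q, c)
   to (q, c'), c <= c', all of whose operations are insensitive to raising the
   counter; either cycle can be repeated forever.  Conversely, look at the
   record times of a Buchi run, after which the counter never drops below its
   current value: either infinitely many of them share a level, and two of them
   with the same state around a visit to F enclose a nested cycle, or their
   levels eventually exceed every parameter, and then the segment between two
   such records is of the second kind.

   These witnesses are inductive, and the automaton mirrors their rules: a
   state claims that an obligation fails at the box of w whose rank is the
   current counter value, and the tests [= x], [>= x] are checked by walking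
   to the position of x. *)

Definition asbool (P : Prop) : bool :=
  if excluded_middle_informative P then true else false.

Lemma asboolP (P : Prop) : reflect P (asbool P).
Proof. by rewrite /asbool; case: excluded_middle_informative => h; constructor. Qed.

Definition infinitely_often (P : nat -> Prop) := forall N, exists2 i, N <= i & P i.

Definition eventually (P : nat -> Prop) := exists N, forall i, N <= i -> P i.

Lemma not_infinitely_often (P : nat -> Prop) :
  ~ infinitely_often P -> eventually (fun i => ~ P i).
Proof.
move=> nP; apply: NNPP => nE; apply: nP => N; apply: NNPP => nPN.
by apply: nE; exists N => i le_Ni Pi; apply: nPN; exists i.
Qed.

Lemma eventually_all (T : eqType) (s : seq T) (P : T -> nat -> Prop) :
  (forall x, x \in s -> eventually (P x)) ->
  eventually (fun i => forall x, x \in s -> P x i).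
Proof.
elim: s => [|y s IHs] evP; first by exists 0.
have [N1 P1] := evP y (mem_head y s).
have [N2 P2] := IHs (fun x sx => evP x (mem_behead (s := y :: s) sx)).
exists (maxn N1 N2) => i; rewrite geq_max => /andP [le1 le2] x.
by rewrite inE => /predU1P [->|sx]; [apply: P1 | apply: P2].
Qed.

Lemma infinitely_often_eventually (P R : nat -> Prop) :
  infinitely_often P -> eventually R -> infinitely_often (fun i => P i /\ R i).
Proof.
move=> infP [N RN] M; have [i le_i Pi] := infP (maxn M N).
by move: le_i; rewrite geq_max => /andP [le_Mi le_Ni]; exists i => //; split; last exact: RN.
Qed.

Lemma infinitely_often_pigeonhole (T : finType) (f : nat -> T) (P : nat -> Prop) :
  infinitely_often P -> exists x, infinitely_often (fun i => P i /\ f i = x).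
Proof.
move=> infP; apply: NNPP => nx.
have evx x : x \in enum T -> eventually (fun i => ~ (P i /\ f i = x)).
  by move=> _; apply: not_infinitely_often => infx; apply: nx; exists x.
have [N HN] := eventually_all evx; have [i le_Ni Pi] := infP N.
exact: HN i le_Ni (f i) (mem_enum T _) (conj Pi erefl).
Qed.

Lemma InSeq_mem (T : eqType) (x : T) s : InSeq x s <-> x \in s.
Proof.
elim: s => [|y s IHs] //=; rewrite inE IHs eq_sym.
by split => [[->|->]|/orP [/eqP ->|]]; rewrite ?eqxx ?orbT; [| | left | right].
Qed.

Lemma InSeq_map (T U : Type) (f : T -> U) x s :
  InSeq x (map f s) <-> exists2 y, InSeq y s & f y = x.
Proof.
elim: s => [|y s IHs] /=; first by split => // [[]].
rewrite IHs; split => [[<-|[z sz <-]]|[z [<-|sz] <-]].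
- by exists y; [left|].
- by exists z; [right|].
- by left.
- by right; exists z.
Qed.

Lemma InSeq_flatten (T : Type) (x : T) ss :
  InSeq x (flatten ss) <-> exists2 s, InSeq s ss & InSeq x s.
Proof.
have InSeq_cat s1 s2 : InSeq x (s1 ++ s2) <-> InSeq x s1 \/ InSeq x s2.
  by elim: s1 => [|y s1 IHs] /=; [tauto | rewrite IHs; tauto].
elim: ss => [|s ss IHss] /=; first by split => // [[]].
rewrite InSeq_cat IHss; split => [[xs|[s' ss' xs']]|[s' [<-|ss'] xs']].
- by exists s; [left|].
- by exists s'; [right|].
- by left.
- by right; exists s'.
Qed.

(** * Acceptance as a safety game *)

Lemma bsat_mono (S : Type) (P P' : S -> dir -> Prop) f :
  (forall s d, P s d -> P' s d) -> bsat P f -> bsat P' f.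
Proof. by move=> PP'; elim: f => //= f IHf g IHg; [case; split; auto | case; auto]. Qed.

Section SafetyGame.
Variables (S X : finType) (T : a2a S X) (w : pword X).

(* [dual_sat R m f]: every set of moves satisfying [f] at position [m] contains
   a move into [R]. *)
Fixpoint dual_sat (R : S -> nat -> Prop) (m : nat) (f : bform S) : Prop :=
  match f with
  | BTrue => False
  | BFalse => True
  | BAtom s d => forall n, moved m d n -> R s n
  | BAnd f g => dual_sat R m f \/ dual_sat R m g
  | BOr f g => dual_sat R m f /\ dual_sat R m g
  end.

Definition refute_step (R : S -> nat -> Prop) (s : S) (m : nat) : Prop :=
  forall t, InSeq t (a_delta T) -> t.1.1 = s -> label_ok w m t.1.2 -> dual_sat R m t.2.

(* Configurations from which no run tree can be built (exactly those, when
   all states are accepting). *)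
Definition refuted (s : S) (m : nat) : Prop :=
  forall R : S -> nat -> Prop, (forall s m, refute_step R s m -> R s m) -> R s m.

Lemma dual_sat_mono (R R' : S -> nat -> Prop) m f :
  (forall s n, R s n -> R' s n) -> dual_sat R m f -> dual_sat R' m f.
Proof.
move=> RR'; elim: f => //= [s d Rf n /Rf|f IHf g IHg|f IHf g IHg]; first exact: RR'.
- by case; auto.
- by case; split; auto.
Qed.

Lemma refuted_ind (R : S -> nat -> Prop) :
  (forall s m, refute_step R s m -> R s m) -> forall s m, refuted s m -> R s m.
Proof. by move=> closedR s m; apply. Qed.

Lemma refuted_fold s m : refute_step refuted s m -> refuted s m.
Proof.
move=> stepR R closedR; apply: (closedR) => t t_in t_s t_l.
by apply: dual_sat_mono (stepR t t_in t_s t_l) => s' n /(_ R closedR).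
Qed.

Lemma bsat_dual_sat (P : S -> dir -> Prop) R m f :
  bsat P f -> dual_sat R m f -> exists s d, P s d /\ forall n, moved m d n -> R s n.
Proof.
elim: f => [||s d|f IHf g IHg|f IHf g IHg] //=; first by exists s, d.
- by case=> Pf Pg [/(IHf Pf)|/(IHg Pg)].
- by case=> [/IHf IH [/IH]|/IHg IH [_ /IH]].
Qed.

Lemma not_dual_sat R m f :
  ~ dual_sat R m f -> bsat (fun s d => exists2 n, moved m d n & ~ R s n) f.
Proof.
elim: f => [||s d|f IHf g IHg|f IHf g IHg] //= nR.
- apply: NNPP => nex; apply: nR => n mv; apply: NNPP => nRn; apply: nex; by exists n.
- by split; [apply: IHf => Rf; apply: nR; left | apply: IHg => Rg; apply: nR; right].
- case: (classic (dual_sat R m f)) => Rf; last by left; exact: IHf.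
  by right; apply: IHg => Rg; exact: nR.
Qed.

Lemma run_tree_not_refuted n ar lab : run_tree T w n ar lab ->
  forall v, valid_node ar v -> ~ refuted (lab v).1 (lab v).2.
Proof.
move=> [_ local] v0 v0_valid ref0.
pose R s m := forall v, valid_node ar v -> lab v <> (s, m).
suff: R (lab v0).1 (lab v0).2 by move/(_ v0 v0_valid); rewrite -surjective_pairing.
apply: (refuted_ind _ ref0) => {v0 v0_valid ref0} s m stepR v v_valid lab_v.
have := local v v_valid; rewrite /local_ok lab_v => -[t t_in [t_s t_l _ t_sat]].
have [s' [d [[i [lt_i lab_i mv]] Rs']]] := bsat_dual_sat t_sat (stepR t t_in t_s t_l).
apply: (Rs' _ mv (i :: v)); first by rewrite /= lt_i v_valid.
by rewrite -lab_i -surjective_pairing.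
Qed.

Lemma accepts_not_refuted : a2a_accepts T w -> ~ refuted (a_init T) 0.
Proof.
case=> ar [lab [tree _]]; have := run_tree_not_refuted tree (v := [::]) erefl.
by rewrite (proj1 tree).
Qed.

(* The canonical run tree: the children of a configuration are all its
   unrefuted neighbours. *)
Definition neighbours (m : nat) : seq (S * nat) :=
  [seq (s, n) | s <- enum S, n <- [:: m.-1; m; m.+1]].

Definition good_children (x : S * nat) : seq (S * nat) :=
  [seq y <- neighbours x.2 | asbool (~ refuted y.1 y.2)].

Fixpoint canon_label (v : seq nat) : S * nat :=
  if v is i :: v' then nth (a_init T, 0) (good_children (canon_label v')) i
  else (a_init T, 0).

Definition canon_arity (v : seq nat) : nat := size (good_children (canon_label v)).

Lemma mem_neighbours m s n : (s, n) \in neighbours m <-> exists d, moved m d n.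
Proof.
split.
- case/allpairsP => -[s0 n0] [_ /= n0_near [_ ->]].
  move: n0_near; rewrite !inE => near.
  by case: (ltngtP n0 m) => [lt|gt|->]; [exists DLeft | exists DRight | exists DStay] => /=; lia.
- case=> d mv; apply/allpairsP; exists (s, n); rewrite mem_enum !inE.
  by case: d mv => /= [<-|->|->]; rewrite ?eqxx ?orbT.
Qed.

Lemma canon_label_not_refuted v : ~ refuted (a_init T) 0 -> valid_node canon_arity v ->
  ~ refuted (canon_label v).1 (canon_label v).2.
Proof.
move=> good0; elim: v => //= i v IHv /andP [lt_i _].
by have := mem_nth (a_init T, 0) lt_i; rewrite mem_filter => /andP [/asboolP].
Qed.

Lemma canon_run_tree : ~ refuted (a_init T) 0 -> run_tree T w 0 canon_arity canon_label.
Proof.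
move=> good0; split => // v v_valid; have := canon_label_not_refuted good0 v_valid.
rewrite /local_ok /canon_arity /=; case: (canon_label v) => s m /= good_sm.
have [t t_in [t_s t_l not_ref]] : exists2 t, InSeq t (a_delta T) &
    [/\ t.1.1 = s, label_ok w m t.1.2 & ~ dual_sat refuted m t.2].
  apply: NNPP => none; apply: good_sm; apply: refuted_fold => t t_in t_s t_l.
  by apply: NNPP => not_ref; apply: none; exists t.
exists t => //; split => //.
- move=> i lt_i; have := mem_nth (a_init T, 0) lt_i.
  by rewrite mem_filter => /andP [_]; case: nth => s' n /mem_neighbours.
- apply: bsat_mono (not_dual_sat not_ref) => s' d [n mv good_n].
  have child : (s', n) \in good_children (s, m).
    by rewrite mem_filter /=; apply/andP; split; [apply/asboolP | apply/mem_neighbours; exists d].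
  by exists (index (s', n) (good_children (s, m))); rewrite index_mem nth_index.
Qed.

Lemma accepts_iff_not_refuted :
  a_acc T = setT -> a2a_accepts T w <-> ~ refuted (a_init T) 0.
Proof.
move=> acc_all; split; first exact: accepts_not_refuted.
move=> good0; exists canon_arity, canon_label; split; first exact: canon_run_tree.
by move=> b _ N; exists N; rewrite ?acc_all ?inE.
Qed.

End SafetyGame.

Definition bigAnd (S : Type) (I : finType) (g : I -> bform S) : bform S :=
  foldr (@BAnd S) (BTrue S) [seq g i | i <- enum I].

Lemma dual_sat_bigAnd (S I : finType) (R : S -> nat -> Prop) m (g : I -> bform S) :
  dual_sat R m (bigAnd g) <-> exists i, dual_sat R m (g i).
Proof.
rewrite /bigAnd; have : forall s : seq I,
    dual_sat R m (foldr (@BAnd S) (BTrue S) [seq g i | i <- s]) <->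
    exists2 i, i \in s & dual_sat R m (g i).
  elim=> [|j s IHs] /=; first by split => // [[]].
  rewrite IHs; split => [[Rj|[i s_i Ri]]|[i]]; first by exists j; rewrite ?mem_head.
  - by exists i; rewrite // inE s_i orbT.
  - by rewrite inE => /predU1P [->|s_i] Ri; [left | right; exists i].
by move=> ->; split => [[i _ Ri]|[i Ri]]; exists i; rewrite ?mem_enum.
Qed.

Lemma bigAnd_size (S : Type) (I : finType) (g : I -> bform S) b :
  (forall i, bform_size (g i) <= b) -> bform_size (bigAnd g) <= #|I| * b.+1 + 1.
Proof.
move=> size_g; rewrite /bigAnd cardE; elim: (enum I) => //= i s IHs.
by have := size_g i; rewrite mulSn; lia.
Qed.

(** * Parameter words *)

Section ParameterWords.
Variables (X : finType) (w : pword X).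

Lemma nboxes0 : nboxes w 0 = 0.
Proof. by rewrite /nboxes big_geq. Qed.

Lemma nboxesS m : nboxes w m.+1 = nboxes w m + (if w m.+1 is None then 1 else 0).
Proof. by rewrite /nboxes big_nat_recr. Qed.

Lemma nboxes_param m x : w m.+1 = Some x -> nboxes w m.+1 = nboxes w m.
Proof. by rewrite nboxesS => ->; rewrite addn0. Qed.

Lemma nboxes_box m : w m.+1 = None -> nboxes w m.+1 = (nboxes w m).+1.
Proof. by rewrite nboxesS => ->; rewrite addn1. Qed.

Lemma nboxes_mono : {homo nboxes w : i j / i <= j}.
Proof.
move=> i j /subnK <-; elim: (j - i) => //= k IHk.
by rewrite addSn nboxesS (leq_trans IHk) ?leq_addr.
Qed.

Lemma nboxes_box_lt i j : i < j -> w j = None -> nboxes w i < nboxes w j.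
Proof. by case: j => // j lt_ij box_j; rewrite nboxes_box // ltnS nboxes_mono. Qed.

Lemma nboxes_const i j : i <= j -> (forall k, i < k <= j -> w k <> None) ->
  nboxes w j = nboxes w i.
Proof.
move=> /subnK <-; elim: (j - i) => //= k IHk params.
have [x wx] : exists x, w (k + i).+1 = Some x.
  by case E: (w _) => [x|]; [exists x | case: (params (k + i).+1); rewrite ?E //; lia].
by rewrite addSn (nboxes_param wx) IHk // => l rng; apply: params; lia.
Qed.

Lemma box_nboxes0 m : w m = None -> nboxes w m = 0 -> m = 0.
Proof. by case: m => // m /nboxes_box ->. Qed.

Lemma nboxes_pred m : w m = None -> 0 < m -> nboxes w m = (nboxes w m.-1).+1.
Proof. by case: m => // m /nboxes_box. Qed.

Lemma nboxes_pred_param m x : w m = Some x -> nboxes w m.-1 = nboxes w m.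
Proof. by case: m => [|m /nboxes_param ->]. Qed.

(* The level of the nearest box at or after position [m]. *)
Definition next_box_level (m : nat) : nat :=
  if w m is None then nboxes w m else (nboxes w m).+1.

Lemma next_box_level_box m : w m = None -> next_box_level m = nboxes w m.
Proof. by rewrite /next_box_level => ->. Qed.

Lemma next_box_level_succ m : next_box_level m.+1 = (nboxes w m).+1.
Proof.
rewrite /next_box_level; case E: (w m.+1) => [x|]; last by rewrite nboxes_box.
by rewrite (nboxes_param E).
Qed.

Lemma next_box_level_param m x : w m = Some x -> next_box_level m.+1 = next_box_level m.
Proof. by rewrite next_box_level_succ /next_box_level => ->. Qed.

Definition param_ahead (x : X) (m : nat) : Prop :=
  exists i, [/\ m <= i, w i = Some x & forall j, m <= j <= i -> w j <> None].

Definition param_behind (x : X) (m : nat) : Prop := exists2 i, i <= m & w i = Some x.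

Hypothesis w_param : is_param_word w.

Lemma param_word0 : w 0 = None.
Proof. exact: w_param.1. Qed.

Lemma param_pos m x : w m = Some x -> 0 < m.
Proof. by case: m => //; rewrite param_word0. Qed.

Lemma param_position x : exists i, w i = Some x.
Proof. by have [i [wi _]] := w_param.2 x; exists i. Qed.

Lemma param_position_uniq x i j : w i = Some x -> w j = Some x -> i = j.
Proof. by have [k [_ uniq_k]] := w_param.2 x => /uniq_k <- /uniq_k <-. Qed.

Lemma box_after m : exists2 n, m <= n & w n = None.
Proof.
have late x : x \in enum X -> eventually (fun i => w i <> Some x).
  have [i wi] := param_position x; exists i.+1 => j lt_ij wj.
  by move: lt_ij; rewrite (param_position_uniq wj wi) ltnn.
have [N HN] := eventually_all late; exists (maxn m N); first exact: leq_maxl.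
by case E: (w _) => [x|] //; case: (HN _ (leq_maxr m N) x (mem_enum X x)).
Qed.

Variables (V : X -> nat).
Hypothesis V_w : is_Vw w V.

Lemma eq_param_iff x m : w m = None -> V x = nboxes w m <-> param_ahead x m.+1.
Proof.
move=> box_m; have [i wi] := param_position x; rewrite (V_w wi); split.
- move=> eq_lvl; have lt_mi : m < i.
    case: (ltngtP m i) => // [gt_mi|eq_mi]; last by move: wi; rewrite -eq_mi box_m.
    by have := nboxes_box_lt gt_mi box_m; rewrite eq_lvl ltnn.
  exists i; split => // j /andP [lt_mj le_ji] box_j.
  by have := leq_trans (nboxes_box_lt lt_mj box_j) (nboxes_mono le_ji); rewrite eq_lvl ltnn.
- case=> i' [lt_mi' wi' params]; rewrite (param_position_uniq wi wi').
  by apply: nboxes_const => [|k /andP [lt_mk le_ki']]; [exact: ltnW | apply: params; rewrite lt_mk].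
Qed.

Lemma ge_param_iff x m : w m = None ->
  V x <= nboxes w m <-> param_ahead x m.+1 \/ param_behind x m.
Proof.
move=> box_m; split.
- have [i wi] := param_position x; rewrite (V_w wi) => le_lvl.
  case: (leqP i m) => [le_im|lt_mi]; first by right; exists i.
  left; apply/(eq_param_iff _ box_m); rewrite (V_w wi).
  by apply/eqP; rewrite eqn_leq le_lvl nboxes_mono // ltnW.
- case=> [/(eq_param_iff _ box_m) -> //|[i le_im wi]].
  by rewrite (V_w wi) nboxes_mono.
Qed.

End ParameterWords.

(** * Buchi runs of an OCAPT and their witnesses *)

Lemma not_visits_finitely (Q : finType) (F : {set Q}) (r : nat -> Q * nat) :
  ~ visits_finitely F r <-> infinitely_often (fun i => (r i).1 \in F).
Proof.
split => [nfin N|infF [N finN]]; last first.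
  by have [i le_Ni F_i] := infF N; move: (finN i le_Ni); rewrite F_i.
by apply: NNPP => nF; apply: nfin; exists N => i le_Ni; apply/negP => F_i; apply: nF; exists i.
Qed.

Section BuchiWitnesses.
Variables (Q X : finType) (A : ocapt Q X) (F : {set Q}) (V : X -> nat).

Local Notation step := (ostep A V).
Local Notation trans_op q q' := (odelta A (q, q')).
Local Notation inF x := (x.1 \in F).

(* The operations that remain enabled, with the same effect, when the counter
   is raised. *)
Definition monotone_op (o : op X) : bool :=
  match o with OAdd _ | OGeP _ => true | _ => false end.

Lemma ostep_level q q' c c' : step (q, c) (q', c') -> [\/ c' = c, c' = c.+1 | c = c'.+1].
Proof.
move=> st; suff: c' = c \/ c' = c.+1 \/ c = c'.+1.
  by case=> [->|[->|->]]; [apply: Or31 | apply: Or32 | apply: Or33].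
by case: st => _; case: (trans_op q q') => [[]| |x|x] /=; lia.
Qed.

Lemma ostep_up_monotone q q' c : step (q, c) (q', c.+1) -> monotone_op (trans_op q q').
Proof. by case=> _; case: (trans_op q q') => [[]| |x|x] //=; lia. Qed.

Lemma ostep_down_monotone q q' c : step (q, c.+1) (q', c) -> monotone_op (trans_op q q').
Proof. by case=> _; case: (trans_op q q') => [[]| |x|x] //=; lia. Qed.

Lemma ostep_high_monotone q q' c c' : step (q, c) (q', c') -> 0 < c ->
  (forall x, V x < c) -> monotone_op (trans_op q q').
Proof.
case=> _ + c_pos V_lt; case: (trans_op q q') => [[]| |x|x] //=; first lia.
by have := V_lt x; lia.
Qed.

Definition shift (d : nat) (x : Q * nat) : Q * nat := (x.1, x.2 + d).

Lemma ostep_shift q q' c c' d : step (q, c) (q', c') ->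
  monotone_op (trans_op q q') || (d == 0) -> step (q, c + d) (q', c' + d).
Proof.
move=> st /orP [|/eqP ->]; last by rewrite !addn0.
case: st; rewrite /ostep /=; case: (trans_op q q') => [[]| |x|x] //= T_qq' eff _.
all: by split => //; lia.
Qed.

(* [nested_path b q p f c]: a path from (q, c) back to level c in state p on
   which the counter never drops below c; it visits F if f holds, and all its
   operations are monotone if b holds. *)
Inductive nested_path (b : bool) : Q -> Q -> bool -> nat -> Prop :=
  | NPnil q c : nested_path b q q false c
  | NPstay q q' p f f' c : step (q, c) (q', c) -> b ==> monotone_op (trans_op q q') ->
      f ==> (q' \in F) || f' -> nested_path b q' p f' c -> nested_path b q p f c
  | NPup q q1 q2 q3 p f f1 f2 c : step (q, c) (q1, c.+1) -> step (q2, c.+1) (q3, c) ->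
      f ==> [|| q1 \in F, f1, q3 \in F | f2] ->
      nested_path b q1 q2 f1 c.+1 -> nested_path b q3 p f2 c -> nested_path b q p f c.

(* [monotone_path q p f c]: a path of monotone operations from (q, c) to p at
   some level >= c on which the counter never drops below c. *)
Inductive monotone_path : Q -> Q -> bool -> nat -> Prop :=
  | MPnil q c : monotone_path q q false c
  | MPstay q q' p f f' c : step (q, c) (q', c) -> monotone_op (trans_op q q') ->
      f ==> (q' \in F) || f' -> monotone_path q' p f' c -> monotone_path q p f c
  | MPup q q1 q2 q3 p f f1 f2 c : step (q, c) (q1, c.+1) -> step (q2, c.+1) (q3, c) ->
      f ==> [|| q1 \in F, f1, q3 \in F | f2] ->
      nested_path true q1 q2 f1 c.+1 -> monotone_path q3 p f2 c -> monotone_path q p f c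
  | MPclimb q q1 p f f1 c : step (q, c) (q1, c.+1) -> f ==> (q1 \in F) || f1 ->
      monotone_path q1 p f1 c.+1 -> monotone_path q p f c.

(* A nested cycle through F can be repeated forever; a monotone cycle through
   F can be repeated forever, each round starting higher. *)
Inductive buchi_witness : Q -> nat -> Prop :=
  | BWcycle q c : nested_path false q q true c -> buchi_witness q c
  | BWpump q c : monotone_path q q true c -> buchi_witness q c
  | BWstep q q' c c' : step (q, c) (q', c') -> buchi_witness q' c' -> buchi_witness q c.

Fixpoint chain (x : Q * nat) (l : seq (Q * nat)) : Prop :=
  if l is y :: l' then step x y /\ chain y l' else True.

Lemma chain_cat x l1 l2 : chain x (l1 ++ l2) <-> chain x l1 /\ chain (last x l1) l2.
Proof. by elim: l1 x => [|y l1 IHl] x /=; [tauto | rewrite IHl; tauto]. Qed.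

Lemma chain_nth z x l j : chain x l -> j < size l ->
  step (nth z (x :: l) j) (nth z (x :: l) j.+1).
Proof.
elim: l x j => [|y l IHl] x [|j] //= [st_xy ch] lt_j //.
exact: (IHl y j ch).
Qed.

Lemma chain_up q q1 q2 q3 c l1 l2 d :
  step (q, c) (q1, c.+1) -> step (q2, c.+1) (q3, c) -> last (q1, c.+1) l1 = (q2, c.+1) ->
  chain (q1, c.+1 + d) (map (shift d) l1) -> chain (q3, c + d) (map (shift d) l2) ->
  chain (q, c + d) (map (shift d) ((q1, c.+1) :: l1 ++ (q3, c) :: l2)).
Proof.
move=> up down last1 ch1 ch2; rewrite /= map_cat chain_cat last_map last1 /=.
split; first by apply: (ostep_shift up); rewrite (ostep_up_monotone up).
split=> //; split=> //; apply: (ostep_shift down); by rewrite (ostep_down_monotone down).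
Qed.

Lemma nested_path_chain b q p f c : nested_path b q p f c -> exists l,
  [/\ last (q, c) l = (p, c), f -> has (fun y => inF y) l
    & forall d, b || (d == 0) -> chain (q, c + d) (map (shift d) l)].
Proof.
elim=> {q p f c} [q c|q q' p f f' c st mon flag _ [l [last_l F_l ch]]|
                  q q1 q2 q3 p f f1 f2 c up down flag _ [l1 [last1 F1 ch1]] _ [l2 [last2 F2 ch2]]].
- by exists [::].
- exists ((q', c) :: l); split=> //= [fT|d bd].
    by move: flag; rewrite fT /= => /orP [->|/F_l ->]; rewrite ?orbT.
  split; last exact: ch d bd.
  by apply: (ostep_shift st); move: mon bd; case: (b) => /= [-> //|_ ->]; rewrite orbT.
- exists ((q1, c.+1) :: l1 ++ (q3, c) :: l2); split => [|fT|d bd].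
  + by rewrite /= last_cat.
  + move: flag; rewrite fT /= has_cat /=.
    by case/or4P => [->|/F1 ->|->|/F2 ->]; rewrite ?orbT.
  + exact: chain_up up down last1 (ch1 d bd) (ch2 d bd).
Qed.

Lemma monotone_path_chain q p f c : monotone_path q p f c -> exists l c',
  [/\ last (q, c) l = (p, c'), c <= c', f -> has (fun y => inF y) l
    & forall d, chain (q, c + d) (map (shift d) l)].
Proof.
elim=> {q p f c} [q c|q q' p f f' c st mon flag _ [l [c' [last_l le_c F_l ch]]]|
                  q q1 q2 q3 p f f1 f2 c up down flag np _ [l2 [c' [last2 le_c F2 ch2]]]|
                  q q1 p f f1 c up flag _ [l [c' [last_l le_c F_l ch]]]].
- by exists [::], c.
- exists ((q', c) :: l), c'; split=> //= [fT|d].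
    by move: flag; rewrite fT /= => /orP [->|/F_l ->]; rewrite ?orbT.
  by split; [apply: (ostep_shift st); rewrite mon | exact: ch].
- have [l1 [last1 F1 ch1]] := nested_path_chain np.
  exists ((q1, c.+1) :: l1 ++ (q3, c) :: l2), c'; split => // [|fT|d].
  + by rewrite /= last_cat.
  + move: flag; rewrite fT /= has_cat /=.
    by case/or4P => [->|/F1 ->|->|/F2 ->]; rewrite ?orbT.
  + exact: chain_up up down last1 (ch1 d isT) (ch2 d).
- exists ((q1, c.+1) :: l), c'; split=> //= [|fT|d]; first exact: ltnW.
    by move: flag; rewrite fT /= => /orP [->|/F_l ->]; rewrite ?orbT.
  by split; [apply: (ostep_shift up); rewrite (ostep_up_monotone up) | exact: ch].
Qed.

Definition run_from (x : Q * nat) (r : nat -> Q * nat) : Prop :=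
  r 0 = x /\ forall i, step (r i) (r i.+1).

(* Round [k] of the run follows the path [x :: l] raised by [k * e]. *)
Lemma pumped_run q c e l : l != [::] -> last (q, c) l = (q, c + e) ->
  has (fun y => inF y) l -> (forall k, chain (q, c + k * e) (map (shift (k * e)) l)) ->
  exists r, run_from (q, c) r /\ infinitely_often (fun i => inF (r i)).
Proof.
move=> l_nil last_l F_l ch; set L := size l; have L_pos : 0 < L by rewrite lt0n size_eq0.
pose x := (q, c); pose p j := nth x (x :: l) j.
have p_wrap : p L = shift e (p 0).
  by rewrite /p -[L]/((size (x :: l)).-1) nth_last /= last_l.
have p_step k j : j < L -> step (shift (k * e) (p j)) (shift (k * e) (p j.+1)).
  move=> lt_jL; have := chain_nth (shift (k * e) x) (ch k) (j := j).
  rewrite size_map => /(_ lt_jL); rewrite -[_ :: map _ l]/(map (shift (k * e)) (x :: l)).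
  by rewrite !(nth_map x) //= ltnS // ltnW.
pose r i := shift (i %/ L * e) (p (i %% L)).
have r_succ i : r i.+1 = shift (i %/ L * e) (p (i %% L).+1).
  have lt_iL : i %% L < L by rewrite ltn_mod.
  rewrite /r {1 2}(divn_eq i L) -addnS.
  case: (ltngtP (i %% L).+1 L) => [lt|gt|eq].
  - by rewrite divnMDl // modnMDl (divn_small lt) (modn_small lt) addn0.
  - by move: gt; rewrite ltnS leqNgt lt_iL.
  - rewrite eq addnC -mulSn mulnK // modnMl p_wrap.
    by rewrite /shift /= mulSn addnA.
exists r; split; first split.
- by rewrite /r div0n mod0n mul0n /shift /= addn0.
- by move=> i; rewrite r_succ; apply: p_step; rewrite ltn_mod.
- case/hasP: F_l => y y_l F_y N; set j := index y l.
  have lt_jL : j < L by rewrite index_mem.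
  exists (N * L + j).+1; first by rewrite ltnW // ltnS (leq_trans (leq_pmulr N L_pos)) ?leq_addr.
  by rewrite r_succ modnMDl modn_small // /p /= nth_index.
Qed.

Lemma buchi_witness_run q c : buchi_witness q c ->
  exists r, run_from (q, c) r /\ infinitely_often (fun i => inF (r i)).
Proof.
elim=> {q c} [q c np|q c mp|q q' c c' st _ [r [[r0 r_step] F_r]]].
- have [l [last_l /(_ isT) F_l ch]] := nested_path_chain np.
  apply: (@pumped_run q c 0 l _ _ F_l).
  + by case: (l) F_l.
  + by rewrite addn0.
  + by move=> k; rewrite muln0; apply: ch.
- have [l [c' [last_l le_cc' /(_ isT) F_l ch]]] := monotone_path_chain mp.
  apply: (@pumped_run q c (c' - c) l _ _ F_l).
  + by case: (l) F_l.
  + by rewrite subnKC.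
  + by move=> k; apply: ch.
- exists (fun i => if i is i'.+1 then r i' else (q, c)); split; first split => //.
    by case=> [|i] //=; rewrite r0.
  by move=> N; have [i le_Ni F_i] := F_r N; exists i.+1; rewrite ?leqW.
Qed.

Section SegmentsOfARun.
Variable r : nat -> Q * nat.
Hypothesis r_step : forall i, step (r i) (r i.+1).

Local Notation st i := (r i).1.
Local Notation lvl i := (r i).2.

Lemma step_at i c c' : lvl i = c -> lvl i.+1 = c' -> step (st i, c) (st i.+1, c').
Proof. by move=> <- <-; rewrite -!surjective_pairing. Qed.

Lemma level_next i : [\/ lvl i.+1 = lvl i, lvl i.+1 = (lvl i).+1 | lvl i = (lvl i.+1).+1].
Proof. by apply: (@ostep_level (st i) (st i.+1)); apply: step_at. Qed.

Definition visitsF (i j : nat) : bool := has (fun k => st k \in F) (index_iota i.+1 j.+1).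

Lemma visitsFP i j : reflect (exists2 k, i < k <= j & st k \in F) (visitsF i j).
Proof.
apply: (iffP hasP) => [[k]|[k rng F_k]]; rewrite ?mem_index_iota; first by exists k.
by exists k; rewrite ?mem_index_iota.
Qed.

Lemma visitsF_nil i : visitsF i i = false.
Proof. by apply/visitsFP => -[k /andP [lt le]]; move: (leq_trans lt le); rewrite ltnn. Qed.

Lemma visitsF_cat i k j : i <= k <= j -> visitsF i j = visitsF i k || visitsF k j.
Proof.
case/andP => le_ik le_kj; rewrite /visitsF /index_iota.
have -> : j.+1 - i.+1 = (k.+1 - i.+1) + (j.+1 - k.+1) by lia.
by rewrite iotaD has_cat; congr (_ || has _ (iota _ _)); lia.
Qed.

Lemma visitsF1 i : visitsF i i.+1 = (st i.+1 \in F).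
Proof. by rewrite /visitsF /index_iota subSn // subnn /= orbF. Qed.

Lemma first_return i j c : lvl i = c -> lvl i.+1 = c.+1 ->
  (forall k, i <= k <= j -> c <= lvl k) -> (exists2 k, i < k <= j & lvl k = c) ->
  exists k, [/\ i < k < j, lvl k = c.+1, lvl k.+1 = c & forall l, i < l <= k -> c < lvl l].
Proof.
move=> lvl_i lvl_i1 above [k0 rng0 lvl_k0].
pose P l := (i < l <= j) && (lvl l == c).
have P_k0 : P k0 by rewrite /P rng0 lvl_k0 eqxx.
have [l /andP [rng /eqP lvl_l] min_l] := ex_minnP (ex_intro P k0 P_k0).
have above_c m : i < m < l -> c < lvl m.
  move=> /andP [lt_im lt_ml]; rewrite ltn_neqAle above ?(ltnW lt_im) ?andbT; last by lia.
  apply/negP => /eqP/esym lvl_m; have := min_l m; rewrite /P lvl_m eqxx andbT; lia.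
have lt_i1l : i.+1 < l.
  by case: (ltngtP i.+1 l) => // [|eq]; [lia | move: lvl_i1; rewrite eq lvl_l; lia].
exists l.-1; rewrite prednK; last by lia.
split => // [||m rng_m]; first by lia.
- by case: (level_next l.-1); rewrite prednK ?lvl_l; have := above_c l.-1; lia.
- by apply: above_c; lia.
Qed.

Lemma visitsF_up i k j : i < k < j ->
  visitsF i j = [|| st i.+1 \in F, visitsF i.+1 k, st k.+1 \in F | visitsF k.+1 j].
Proof.
move=> rng; rewrite (@visitsF_cat i i.+1 j); last lia.
rewrite (@visitsF_cat i.+1 k j); last lia.
by rewrite (@visitsF_cat k k.+1 j) ?visitsF1 //; lia.
Qed.

Lemma nested_segment (b : bool) i j c : i <= j -> lvl i = c -> lvl j = c ->
  (forall k, i <= k <= j -> c <= lvl k) ->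
  (b -> forall k, i <= k < j -> monotone_op (trans_op (st k) (st k.+1))) ->
  nested_path b (st i) (st j) (visitsF i j) c.
Proof.
have [n] := ubnP (j - i); elim: n => // n IHn in i j c *; rewrite ltnS => le_n.
move=> le_ij lvl_i lvl_j above mon.
case: (ltngtP i j) le_ij => // [lt_ij _|<- _]; last by rewrite visitsF_nil; apply: NPnil.
have above_i1 : c <= lvl i.+1 by apply: above; lia.
case: (level_next i) => lvl_i1; rewrite lvl_i in lvl_i1; last by lia.
- apply: (NPstay (f' := visitsF i.+1 j)); first exact: step_at.
  + by apply/implyP => /mon; apply; lia.
  + by rewrite (@visitsF_cat i i.+1 j) ?visitsF1 ?implybb //; lia.
  + apply: IHn => //; first lia.
      by move=> k rng; apply: above; lia.
    by move=> /mon mon' k rng; apply: mon'; lia.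
have [k [rng lvl_k lvl_k1 above_k]] : exists k, [/\ i < k < j, lvl k = c.+1, lvl k.+1 = c
    & forall l, i < l <= k -> c < lvl l].
  by apply: (first_return lvl_i lvl_i1 above); exists j; rewrite ?lt_ij ?leqnn.
apply: (NPup (q2 := st k) (f1 := visitsF i.+1 k) (f2 := visitsF k.+1 j)).
- exact: step_at.
- exact: step_at.
- by rewrite (@visitsF_up i k j rng) implybb.
- apply: (IHn) => //; [lia | lia | move=> /mon mon' k' rng'; apply: mon'; lia].
- apply: IHn => //; [lia | lia | move=> k' rng' | move=> /mon mon' k' rng'].
    by apply: above; lia.
  by apply: mon'; lia.
Qed.

Lemma monotone_segment i j c : i <= j -> lvl i = c -> (forall k, i <= k <= j -> c <= lvl k) ->
  (forall k, i <= k < j -> monotone_op (trans_op (st k) (st k.+1))) ->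
  monotone_path (st i) (st j) (visitsF i j) c.
Proof.
have [n] := ubnP (j - i); elim: n => // n IHn in i j c *; rewrite ltnS => le_n.
move=> le_ij lvl_i above mon.
case: (ltngtP i j) le_ij => // [lt_ij _|<- _]; last by rewrite visitsF_nil; apply: MPnil.
have above_i1 : c <= lvl i.+1 by apply: above; lia.
have flag_next : visitsF i j ==> (st i.+1 \in F) || visitsF i.+1 j.
  by rewrite (@visitsF_cat i i.+1 j) ?visitsF1 ?implybb //; lia.
case: (level_next i) => lvl_i1; rewrite lvl_i in lvl_i1; last by lia.
- apply: (MPstay (f' := visitsF i.+1 j)) flag_next _; first exact: step_at.
  + by apply: mon; lia.
  + apply: IHn => //; [lia | move=> k rng; apply: above | move=> k rng; apply: mon]; lia.
case: (classic (exists2 k, i < k <= j & lvl k = c)) => [ret|no_ret].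
- have [k [rng lvl_k lvl_k1 above_k]] := first_return lvl_i lvl_i1 above ret.
  apply: (MPup (q2 := st k) (f1 := visitsF i.+1 k) (f2 := visitsF k.+1 j)).
  + exact: step_at.
  + exact: step_at.
  + by rewrite (@visitsF_up i k j rng) implybb.
  + apply: nested_segment => //; [lia | move=> _ k' rng'; apply: mon; lia].
  + apply: IHn => //; [lia | lia | move=> k' rng'; apply: above | move=> k' rng'; apply: mon]; lia.
- apply: (MPclimb (f1 := visitsF i.+1 j)) flag_next _; first exact: step_at.
  apply: IHn => //; [lia | move=> k rng | move=> k rng; apply: mon; lia].
  rewrite ltn_neqAle above ?andbT; last by lia.
  by apply/eqP => lvl_k; apply: no_ret; exists k; rewrite // ?lvl_k; lia.
Qed.

Lemma buchi_witness_prefix i : buchi_witness (st i) (lvl i) -> buchi_witness (st 0) (lvl 0).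
Proof.
elim: i => // i IHi bw; apply: IHi; apply: (BWstep _ bw).
by rewrite -!surjective_pairing.
Qed.

Definition record (i : nat) : Prop := forall j, i <= j -> lvl i <= lvl j.

Lemma records_often : infinitely_often record.
Proof.
move=> N; pose P v := asbool (exists2 j, N <= j & lvl j = v).
have P_lvlN : P (lvl N) by apply/asboolP; exists N.
have [v /asboolP [j le_Nj lvl_j] min_v] := ex_minnP (ex_intro P _ P_lvlN).
exists j => // j' le_jj'; rewrite lvl_j; apply: min_v; apply/asboolP.
by exists j' => //; exact: leq_trans le_Nj le_jj'.
Qed.

Lemma visits_between (P : nat -> Prop) : infinitely_often P ->
  infinitely_often (fun i => st i \in F) -> exists i j, [/\ P i, P j & visitsF i j].
Proof.
move=> infP infF; have [i _ Pi] := infP 0; have [k lt_ik F_k] := infF i.+1.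
have [j le_kj Pj] := infP k; exists i, j; split => //.
by apply/visitsFP; exists k; rewrite ?lt_ik.
Qed.

Lemma visitsF_lt i j : visitsF i j -> i < j.
Proof. by case/visitsFP => k /andP [lt_ik le_kj] _; exact: leq_trans lt_ik le_kj. Qed.

Lemma nested_cycle_witness i j : record i -> visitsF i j -> st j = st i -> lvl j = lvl i ->
  buchi_witness (st i) (lvl i).
Proof.
move=> rec_i vis st_j lvl_j; apply: BWcycle; rewrite -[in X in nested_path _ _ X]st_j -vis.
apply: nested_segment => //; first exact: ltnW (visitsF_lt vis).
by move=> k /andP [le_ik _]; apply: rec_i.
Qed.

Lemma pumped_cycle_witness i j : record i -> visitsF i j -> st j = st i ->
  0 < lvl i -> (forall x, V x < lvl i) -> buchi_witness (st i) (lvl i).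
Proof.
move=> rec_i vis st_j lvl_pos V_lt; apply: BWpump; rewrite -[in X in monotone_path _ X]st_j -vis.
have high k : i <= k -> lvl i <= lvl k by apply: rec_i.
apply: monotone_segment => //; first exact: ltnW (visitsF_lt vis).
- by move=> k /andP [le_ik _]; apply: high.
- move=> k /andP [le_ik _]; apply: (ostep_high_monotone (c := lvl k) (c' := lvl k.+1)).
  + exact: step_at.
  + exact: leq_trans lvl_pos (high k le_ik).
  + by move=> x; apply: leq_trans (V_lt x) (high k le_ik).
Qed.

Lemma run_buchi_witness : infinitely_often (fun i => st i \in F) -> buchi_witness (st 0) (lvl 0).
Proof.
move=> infF.
case: (classic (exists L, infinitely_often (fun i => record i /\ lvl i = L))) => [[L infL]|no_L].
  have [q infq] := infinitely_often_pigeonhole (fun i => st i) infL.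
  have [i [j [[[rec_i lvl_i] st_i] [[_ lvl_j] st_j] vis]]] := visits_between infq infF.
  apply: (@buchi_witness_prefix i); apply: (nested_cycle_witness rec_i vis); congruence.
pose K := (\sum_x V x).+1.
have V_lt x : V x < K by rewrite ltnS (bigD1 x) //= leq_addr.
have high : eventually (fun i => record i -> K <= lvl i).
  have low l : l \in iota 0 K -> eventually (fun i => ~ (record i /\ lvl i = l)).
    by move=> _; apply: not_infinitely_often => inf_l; apply: no_L; exists l.
  have [N HN] := eventually_all low; exists N => i le_Ni rec_i; rewrite leqNgt.
  by apply/negP => lt_iK; apply: (HN i le_Ni (lvl i)); rewrite ?mem_iota.
have [q infq] := infinitely_often_pigeonhole (fun i => st i)
  (infinitely_often_eventually records_often high).
have [i [j [[[rec_i high_i] st_i] [_ st_j] vis]]] := visits_between infq infF.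
apply: (@buchi_witness_prefix i); apply: (pumped_cycle_witness rec_i vis); first congruence.
- exact: leq_trans (high_i rec_i).
- by move=> x; apply: leq_trans (V_lt x) (high_i rec_i).
Qed.

End SegmentsOfARun.

Lemma buchi_iff_witness q0 :
  (exists2 r, run_from (q0, 0) r & infinitely_often (fun i => (r i).1 \in F)) <->
  buchi_witness q0 0.
Proof.
split=> [[r [r0 r_step] infF]|/buchi_witness_run [r [run_r infF]]]; last by exists r.
by have := run_buchi_witness r_step infF; rewrite r0.
Qed.

End BuchiWitnesses.

(** * The automaton *)

Section Automaton.
Variables (Q X : finType) (A : ocapt Q X) (F : {set Q}).

Local Notation trans_op q q' := (odelta A (q, q')).
Local Notation inT q q' := ((q, q') \in otrans A).

Definition obligation := (Q + (Q * Q * bool * bool) + (Q * Q * bool))%type.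
Definition oBuchi q : obligation := inl (inl q).
Definition oNested q p f b : obligation := inl (inr (q, p, f, b)).
Definition oMono q p f : obligation := inr (q, p, f).

Definition obligation_holds (V : X -> nat) (k : obligation) (c : nat) : Prop :=
  match k with
  | inl (inl q) => buchi_witness A F V q c
  | inl (inr (q, p, f, b)) => nested_path A F V b q p f c
  | inr (q, p, f) => monotone_path A F V q p f c
  end.

(* A state asserts that a fact fails at the current position: [sObl k true]
   that obligation [k] fails at the level of the next box, [sObl k false] at
   the level of the previous one; [sAhead x] that [x] is not met before the
   next box, [sBehind x] that [x] does not occur up to here; [sPos] asserts
   nothing and only serves to test that the position is not the first one. *)
Definition astate := ((obligation * bool) + (X + X) + unit)%type.
Definition sObl k md : astate := inl (inl (k, md)).
Definition sAhead x : astate := inl (inr (inl x)).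
Definition sBehind x : astate := inl (inr (inr x)).
Definition sPos : astate := inr tt.

Definition nstates := #|{: astate}|.
Definition encode (s : astate) : 'I_nstates := enum_rank s.
Definition decode (i : 'I_nstates) : astate := enum_val i.

Lemma encodeK s : decode (encode s) = s.
Proof. exact: enum_rankK. Qed.

Local Notation formula := (bform 'I_nstates).

Definition atom (s : astate) (d : dir) : formula := BAtom (encode s) d.

Definition is_inc (o : op X) : bool := if o is OAdd UInc then true else false.
Definition is_dec (o : op X) : bool := if o is OAdd UDec then true else false.

(* Operations keeping the counter unchanged; the zero test only at the
   first box. *)
Definition stay_ok (z : bool) (o : op X) : bool :=
  match o with OAdd UNop | OEqP _ | OGeP _ => true | OZero => z | _ => false end.

(* Dually satisfied at the box of level c iff the test of [o] passes with
   counter value c. *)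
Definition test_formula (o : op X) : formula :=
  match o with
  | OEqP x => atom (sAhead x) DRight
  | OGeP x => BAnd (atom (sAhead x) DRight) (atom (sBehind x) DStay)
  | _ => BFalse _
  end.

Definition nil_formula (q p : Q) (f : bool) : formula :=
  if (q == p) && ~~ f then BFalse _ else BTrue _.

Definition stay_formula (z : bool) (q : Q) (f : bool) (cond : Q -> bool)
    (next : Q -> bool -> obligation) : formula :=
  bigAnd (fun t : Q * bool =>
    if [&& inT q t.1, stay_ok z (trans_op q t.1), cond t.1 & f ==> (t.1 \in F) || t.2]
    then BOr (test_formula (trans_op q t.1)) (atom (sObl (next t.1 t.2) true) DStay)
    else BTrue _).

Definition move_formula (q : Q) (f : bool) (cond : Q -> bool) (d : dir) (md : bool)
    (next : Q -> bool -> obligation) : formula :=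
  bigAnd (fun t : Q * bool =>
    if [&& inT q t.1, cond t.1 & f ==> (t.1 \in F) || t.2]
    then atom (sObl (next t.1 t.2) md) d else BTrue _).

Definition up_ok (q : Q) (f : bool) (q1 q2 q3 : Q) (f1 f2 : bool) : bool :=
  [&& inT q q1, is_inc (trans_op q q1), inT q2 q3, is_dec (trans_op q2 q3)
    & f ==> [|| q1 \in F, f1, q3 \in F | f2]].

Definition up_formula (q : Q) (f : bool) (inner : Q -> Q -> bool -> obligation)
    (after : Q -> bool -> obligation) : formula :=
  bigAnd (fun t : Q * Q * Q * bool * bool =>
    let: (q1, q2, q3, f1, f2) := t in
    if up_ok q f q1 q2 q3 f1 f2
    then BOr (atom (sObl (inner q1 q2 f1) true) DRight) (atom (sObl (after q3 f2) true) DStay)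
    else BTrue _).

(* The formula of obligation [k] at a box; [z] tells whether it is the first box. *)
Definition box_formula (k : obligation) (z : bool) : formula :=
  match k with
  | inl (inl q) =>
      BAnd (atom (sObl (oNested q q true false) true) DStay)
     (BAnd (atom (sObl (oMono q q true) true) DStay)
     (BAnd (stay_formula z q false xpredT (fun q' _ => oBuchi q'))
     (BAnd (move_formula q false (fun q' => is_inc (trans_op q q')) DRight true
             (fun q' _ => oBuchi q'))
           (if z then BTrue _
            else move_formula q false (fun q' => is_dec (trans_op q q')) DLeft false
                   (fun q' _ => oBuchi q')))))
  | inl (inr (q, p, f, b)) =>
      BAnd (nil_formula q p f)
     (BAnd (stay_formula z q f (fun q' => b ==> monotone_op (trans_op q q'))
              (fun q' f' => oNested q' p f' b))
           (up_formula q f (fun q1 q2 f1 => oNested q1 q2 f1 b) (fun q3 f2 => oNested q3 p f2 b)))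
  | inr (q, p, f) =>
      BAnd (nil_formula q p f)
     (BAnd (stay_formula z q f (fun q' => monotone_op (trans_op q q')) (fun q' f' => oMono q' p f'))
     (BAnd (up_formula q f (fun q1 q2 f1 => oNested q1 q2 f1 true) (fun q3 f2 => oMono q3 p f2))
           (move_formula q f (fun q' => is_inc (trans_op q q')) DRight true
              (fun q' f' => oMono q' p f'))))
  end.

Definition transition_formula (s : astate) (l : tlabel X) : formula :=
  match s, l with
  | inl (inl (k, _)), TFirst => box_formula k true
  | inl (inl (k, _)), TLetter None => BAnd (atom sPos DLeft) (box_formula k false)
  | inl (inl (k, md)), TLetter (Some _) => atom s (if md then DRight else DLeft)
  | inl (inr (inl x)), TLetter (Some y) => if y == x then BFalse _ else atom s DRight
  | inl (inr (inl x)), TLetter None => BTrue _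
  | inl (inr (inl x)), TFirst => BFalse _
  | inl (inr (inr x)), TLetter (Some y) => if y == x then BFalse _ else atom s DLeft
  | inl (inr (inr x)), TLetter None => atom s DLeft
  | inl (inr (inr x)), TFirst => BTrue _
  | inr _, _ => BTrue _
  end.

Section DualSemantics.
Variable R : 'I_nstates -> nat -> Prop.
Local Notation Robl k md n := (R (encode (sObl k md)) n).

Lemma dual_sat_nil m q p f : dual_sat R m (nil_formula q p f) <-> q = p /\ f = false.
Proof.
rewrite /nil_formula; case: eqP => [->|neq] /=; last by split => // -[].
by case: f; split => // -[].
Qed.

Lemma dual_sat_stay m z q f cond next :
  dual_sat R m (stay_formula z q f cond next) <->
  exists q' f', [/\ [&& inT q q', stay_ok z (trans_op q q'), cond q' & f ==> (q' \in F) || f'],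
    dual_sat R m (test_formula (trans_op q q')) & Robl (next q' f') true m].
Proof.
rewrite dual_sat_bigAnd; split => [[[q' f'] /=]|[q' [f' [ok test next_q']]]].
  by case: ifP => // ok [test next_q']; exists q', f'; split => //; apply: next_q'.
by exists (q', f') => /=; rewrite ok; split => // n ->.
Qed.

Lemma dual_sat_move m q f cond d md next :
  dual_sat R m (move_formula q f cond d md next) <->
  exists q' f', [&& inT q q', cond q' & f ==> (q' \in F) || f'] /\
    forall n, moved m d n -> Robl (next q' f') md n.
Proof.
rewrite dual_sat_bigAnd; split => [[[q' f'] /=]|[q' [f' [ok next_q']]]].
  by case: ifP => // ok next_q'; exists q', f'.
by exists (q', f') => /=; rewrite ok.
Qed.

Lemma dual_sat_up m q f inner after :
  dual_sat R m (up_formula q f inner after) <->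
  exists q1 q2 q3 f1 f2, [/\ up_ok q f q1 q2 q3 f1 f2,
    Robl (inner q1 q2 f1) true m.+1 & Robl (after q3 f2) true m].
Proof.
rewrite dual_sat_bigAnd.
split => [[[[[[q1 q2] q3] f1] f2] /=]|[q1 [q2 [q3 [f1 [f2 [ok in1 af]]]]]]].
  by case: ifP => // ok [in1 af]; exists q1, q2, q3, f1, f2; split => //; [apply: in1 | apply: af].
by exists (q1, q2, q3, f1, f2) => /=; rewrite ok; split => n ->.
Qed.

End DualSemantics.

Definition labels : seq (tlabel X) :=
  TFirst X :: TLetter None :: [seq TLetter (Some x) | x <- enum X].

Definition ocapt_a2a (q0 : Q) : a2a 'I_nstates X :=
  A2A (encode (sObl (oBuchi q0) true))
      [seq (i, l, transition_formula (decode i) l) | i <- enum 'I_nstates, l <- labels]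
      setT.

End Automaton.

Arguments sObl {Q X}.
Arguments sAhead {Q X}.
Arguments sBehind {Q X}.
Arguments sPos {Q X}.
Arguments test_formula {Q X}.
Arguments nil_formula {Q X}.

(** * Correctness *)

Section AutomatonCorrectness.
Variables (Q X : finType) (A : ocapt Q X) (F : {set Q}) (q0 : Q) (w : pword X).
Hypothesis w_param : is_param_word w.
Variable V : X -> nat.
Hypothesis V_w : is_Vw w V.

Local Notation trans_op q q' := (odelta A (q, q')).
Local Notation inT q q' := ((q, q') \in otrans A).
Local Notation T := (ocapt_a2a A F q0).
Local Notation encode := (@encode Q X).
Local Notation decode := (@decode Q X).
Local Notation holds := (obligation_holds A F V).

Lemma InSeq_labels l : InSeq l (labels X).
Proof.
case: l => [[x|]|]; rewrite /labels /=; [right; right | by right; left | by left].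
by apply/InSeq_map; exists x; rewrite // InSeq_mem mem_enum.
Qed.

Lemma InSeq_transitions t : InSeq t (a_delta T) <->
  exists i l, t = (i, l, transition_formula A F (decode i) l).
Proof.
rewrite InSeq_flatten; split => [[s /InSeq_map [i _ <-] /InSeq_map [l _ <-]]|[i [l ->]]].
  by exists i, l.
exists [seq (i, l, transition_formula A F (decode i) l) | l <- labels X].
  by apply/InSeq_map; exists i; rewrite // InSeq_mem mem_enum.
by apply/InSeq_map; exists l; first exact: InSeq_labels.
Qed.

Lemma refute_step_iff R i m : refute_step T w R i m <->
  (m = 0 -> dual_sat R m (transition_formula A F (decode i) (TFirst X))) /\
  dual_sat R m (transition_formula A F (decode i) (TLetter (w m))).
Proof.
split => [stepR|[first letter] t /InSeq_transitions [i' [l ->]] /= ->].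
  split => [m0|]; [apply: (stepR (i, TFirst X, _)) | apply: (stepR (i, TLetter (w m), _))] => //;
    by apply/InSeq_transitions; do 2 eexists.
by case: l => [a <-|m0] //; apply: first.
Qed.

(* Reading the two parameter-seeking states correctly is all that is needed
   of a relation to evaluate the tests of the OCAPT at a box. *)
Definition reads_params (R : 'I_(nstates Q X) -> nat -> Prop) : Prop :=
  (forall x n, R (encode (sAhead x)) n <-> param_ahead w x n) /\
  (forall x n, R (encode (sBehind x)) n <-> param_behind w x n).

Lemma test_formula_iff R m q q' : w m = None -> reads_params R -> inT q q' ->
  stay_ok (m == 0) (trans_op q q') ->
  dual_sat R m (test_formula (trans_op q q')) <-> ostep A V (q, nboxes w m) (q', nboxes w m).
Proof.
move=> box_m [ahead behind] T_qq'; rewrite /ostep /= T_qq'.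
case: (trans_op q q') => [[]| |x|x] //= ok.
- by move/eqP: ok => ->; rewrite nboxes0.
- have eqx := eq_param_iff w_param V_w x box_m.
  split => [/(_ _ erefl) /ahead /eqx Vx|[_ [Vx _]] n ->]; first by rewrite Vx.
  by apply/ahead/eqx.
- have gex := ge_param_iff w_param V_w x box_m.
  split => [Rab|[_ [/gex [/ahead Ra|/behind Rb] _]]]; [|by left => n -> | by right => n ->].
  split=> //; split=> //; apply/gex.
  by case: Rab => [/(_ _ erefl)/ahead|/(_ _ erefl)/behind]; [left | right].
Qed.

Lemma ostep_inc_iff q q' c : ostep A V (q, c) (q', c.+1) <-> inT q q' /\ is_inc (trans_op q q').
Proof.
by rewrite /ostep /=; split => [[->]|[->]]; case: (trans_op q q') => [[]| |x|x] //=; lia.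
Qed.

Lemma ostep_dec_iff q q' c : ostep A V (q, c.+1) (q', c) <-> inT q q' /\ is_dec (trans_op q q').
Proof.
by rewrite /ostep /=; split => [[->]|[->]]; case: (trans_op q q') => [[]| |x|x] //=; lia.
Qed.

Lemma ostep_stay_ok q q' m : w m = None -> ostep A V (q, nboxes w m) (q', nboxes w m) ->
  [/\ inT q q', stay_ok (m == 0) (trans_op q q'), ~~ is_inc (trans_op q q')
    & ~~ is_dec (trans_op q q')].
Proof.
move=> box_m [-> eff]; move: eff; case: (trans_op q q') => [[]| |x|x] //=; try lia.
by case=> /(box_nboxes0 box_m) ->.
Qed.

Definition fact (i : 'I_(nstates Q X)) (m : nat) : Prop :=
  match decode i with
  | inl (inl (k, md)) => holds k (if md then next_box_level w m else nboxes w m)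
  | inl (inr (inl x)) => param_ahead w x m
  | inl (inr (inr x)) => param_behind w x m
  | inr _ => False
  end.

Lemma fact_obl k md m :
  fact (encode (sObl k md)) m = holds k (if md then next_box_level w m else nboxes w m).
Proof. by rewrite /fact encodeK. Qed.

Lemma reads_params_fact : reads_params fact.
Proof. by split => x n; rewrite /fact encodeK. Qed.

Lemma fact_test q q' m : w m = None -> inT q q' -> stay_ok (m == 0) (trans_op q q') ->
  dual_sat fact m (test_formula (trans_op q q')) -> ostep A V (q, nboxes w m) (q', nboxes w m).
Proof. by move=> box_m T_qq' ok /(test_formula_iff box_m reads_params_fact T_qq' ok). Qed.

Section FactsAtABox.
Variable m : nat.
Hypothesis box_m : w m = None.

Let lvl_m : next_box_level w m = nboxes w m.
Proof. by rewrite next_box_level_box. Qed.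

Let lvl_m1 : next_box_level w m.+1 = (nboxes w m).+1.
Proof. by rewrite next_box_level_succ. Qed.

Lemma buchi_box_fact q : dual_sat fact m (box_formula A F (oBuchi q) (m == 0)) ->
  buchi_witness A F V q (nboxes w m).
Proof.
rewrite /=; case=> [|[|[|[]]]]; rewrite ?dual_sat_stay ?dual_sat_move.
- by move/(_ m erefl); rewrite fact_obl lvl_m; apply: BWcycle.
- by move/(_ m erefl); rewrite fact_obl lvl_m; apply: BWpump.
- case=> q' [f' [/and4P [T_qq' ok _ _] test]]; rewrite fact_obl lvl_m.
  exact/BWstep/(fact_test box_m T_qq' ok test).
- case=> q' [f' [/and3P [T_qq' inc _] /(_ m.+1 erefl)]]; rewrite fact_obl lvl_m1.
  by apply/BWstep/ostep_inc_iff; rewrite T_qq'.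
- case: (posnP m) => [_|m_pos] //=; rewrite dual_sat_move.
  case=> q' [f' [/and3P [T_qq' dec _] /(_ m.-1 (prednK m_pos))]]; rewrite fact_obl.
  by rewrite (nboxes_pred box_m m_pos); apply/BWstep/ostep_dec_iff; rewrite T_qq'.
Qed.

Lemma nested_box_fact b q p f : dual_sat fact m (box_formula A F (oNested q p f b) (m == 0)) ->
  nested_path A F V b q p f (nboxes w m).
Proof.
rewrite /=; case=> [/dual_sat_nil [<- ->]|[]]; first exact: NPnil.
- case/dual_sat_stay => q' [f' [/and4P [T_qq' ok mon flag] test]]; rewrite fact_obl lvl_m.
  exact: NPstay (fact_test box_m T_qq' ok test) mon flag.
- case/dual_sat_up => q1 [q2 [q3 [f1 [f2 [/and5P [T1 inc T3 dec flag]]]]]].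
  rewrite !fact_obl lvl_m lvl_m1 => in1 af.
  by apply: NPup in1 af; [apply/ostep_inc_iff | apply/ostep_dec_iff | ].
Qed.

Lemma monotone_box_fact q p f : dual_sat fact m (box_formula A F (oMono q p f) (m == 0)) ->
  monotone_path A F V q p f (nboxes w m).
Proof.
rewrite /=; case=> [/dual_sat_nil [<- ->]|[|[]]]; first exact: MPnil.
- case/dual_sat_stay => q' [f' [/and4P [T_qq' ok mon flag] test]]; rewrite fact_obl lvl_m.
  exact: MPstay (fact_test box_m T_qq' ok test) mon flag.
- case/dual_sat_up => q1 [q2 [q3 [f1 [f2 [/and5P [T1 inc T3 dec flag]]]]]].
  rewrite !fact_obl lvl_m lvl_m1 => in1 af.
  by apply: MPup in1 af; [apply/ostep_inc_iff | apply/ostep_dec_iff | ].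
- case/dual_sat_move => q' [f' [/and3P [T_qq' inc flag] /(_ m.+1 erefl)]].
  rewrite fact_obl lvl_m1; apply: MPclimb flag; exact/ostep_inc_iff.
Qed.

Lemma box_fact k : dual_sat fact m (box_formula A F k (m == 0)) -> holds k (nboxes w m).
Proof.
case: k => [[q|[[[q p] f] b]]|[[q p] f]];
  [exact: buchi_box_fact | exact: nested_box_fact | exact: monotone_box_fact].
Qed.

End FactsAtABox.

Lemma fact_closed i m : refute_step T w fact i m -> fact i m.
Proof.
case/refute_step_iff; rewrite [fact i m]/fact.
case: (decode i) => [[[k md]|[x|x]]|[]] /= first letter.
- case wm: (w m) letter => [y|] letter.
  + case: md letter => /= [/(_ m.+1 erefl)|/(_ m.-1 (prednK (param_pos w_param wm)))].
    * by rewrite fact_obl (next_box_level_param wm).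
    * by rewrite fact_obl (nboxes_pred_param wm).
  + rewrite (_ : (if md then _ else _) = nboxes w m); last first.
      by case: (md); rewrite ?next_box_level_box.
    apply: box_fact => //; case: (posnP m) first => [-> /(_ erefl) //|m_pos _].
    by case: letter => // /(_ m.-1 (prednK m_pos)); rewrite /fact encodeK.
- case wm: (w m) letter => [y|] //; case: eqP => [<- _|_ /(_ m.+1 erefl)].
    by exists m; split => // j; rewrite -eqn_leq => /eqP <-; rewrite wm.
  rewrite /fact encodeK => -[j [le_mj wj params]]; exists j; split => //; first exact: ltnW.
  move=> l /andP [le_ml le_lj]; case: (ltngtP l m) le_ml => // [gt_ml _|-> _]; last by rewrite wm.
  by apply: params; rewrite gt_ml.
- case: (posnP m) first => [-> /(_ erefl) //|m_pos _].
  have back : fact (encode (sBehind x)) m.-1 -> param_behind w x m.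
    by rewrite /fact encodeK => -[j le_j wj]; exists j => //; exact: leq_trans le_j (leq_pred m).
  case wm: (w m) letter => [y|] /=; last by move/(_ m.-1 (prednK m_pos)).
  case: eqP => [<- _|_ /(_ m.-1 (prednK m_pos))]; [by exists m | exact: back].
- by case: (w m) letter.
Qed.

Lemma refuted_fact i m : refuted T w i m -> fact i m.
Proof. exact: refuted_ind fact_closed i m. Qed.

Local Notation refuted := (refuted T w).

Lemma ahead_refuted x m : param_ahead w x m -> refuted (encode (sAhead x)) m.
Proof.
case=> i [+ wi]; have [n] := ubnP (i - m); elim: n m => // n IHn m lt_n le_mi params.
apply: refuted_fold; apply/refute_step_iff; rewrite encodeK; split => //=.
case wm: (w m) => [y|] /=; last by case: (params m); rewrite ?leqnn ?le_mi.
case: eqP => // neq_yx _ ->.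
have lt_mi : m < i.
  by rewrite ltn_neqAle le_mi andbT; apply/eqP => eq_mi; apply: neq_yx; congruence.
apply: IHn => //; first lia.
by move=> j /andP [lt_mj le_ji]; apply: params; rewrite ltnW.
Qed.

Lemma behind_refuted x m : param_behind w x m -> refuted (encode (sBehind x)) m.
Proof.
case=> i + wi; elim: m => [|m IHm] le_im.
  by move: wi; rewrite (_ : i = 0) ?param_word0 //; lia.
apply: refuted_fold; apply/refute_step_iff; rewrite encodeK; split => //=.
case: (ltngtP i m.+1) le_im => // [lt_im _|<- _]; last by rewrite wi eqxx.
by case: (w m.+1) => [y|] /=; [case: eqP => // _|]; move=> n [->]; apply: IHm.
Qed.

Lemma reads_params_refuted : reads_params refuted.
Proof.
split => x n; split; [|exact: ahead_refuted| |exact: behind_refuted];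
  by move/refuted_fact; rewrite /fact encodeK.
Qed.

Definition obligation_refuted (k : obligation Q) (c : nat) : Prop :=
  forall m, (next_box_level w m = c -> refuted (encode (sObl k true)) m) /\
            (nboxes w m = c -> refuted (encode (sObl k false)) m).

(* An obligation refuted at the box of level [c] is refuted wherever it
   travels to that box from. *)
Lemma obligation_refuted_of_box k c :
  (forall m, w m = None -> nboxes w m = c -> dual_sat refuted m (box_formula A F k (m == 0))) ->
  obligation_refuted k c.
Proof.
move=> at_box.
have box md m : w m = None -> nboxes w m = c -> refuted (encode (sObl k md)) m.
  move=> wm lvl_m; apply: refuted_fold; apply/refute_step_iff; rewrite encodeK wm /=.
  split => [m0|]; first by move: (at_box m wm lvl_m); rewrite m0.
  by case: (posnP m) (at_box m wm lvl_m) => [->|_ atb]; [left => n | right].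
have param md m y : w m = Some y ->
    (forall n, moved m (if md then DRight else DLeft) n -> refuted (encode (sObl k md)) n) ->
    refuted (encode (sObl k md)) m.
  move=> wm next; apply: refuted_fold; apply/refute_step_iff; rewrite encodeK wm /=.
  by split => // m0; move: wm; rewrite m0 param_word0.
move=> m; split => [lvl_m|].
- have [n le_mn wn] := box_after w_param m.
  have [d] := ubnP (n - m); elim: d m le_mn lvl_m => // d IHd m le_mn lvl_m lt_d.
  case wm: (w m) => [y|]; last by apply: box => //; rewrite -lvl_m next_box_level_box.
  have lt_mn : m < n.
    by rewrite ltn_neqAle le_mn andbT; apply/eqP => eq_mn; move: wm; rewrite eq_mn wn.
  apply: (param true _ y wm) => _ ->; apply: IHd => //; last lia.
  by rewrite (next_box_level_param wm).
- elim: m => [|m IHm] lvl_m; first by apply: box; rewrite ?param_word0.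
  case wm: (w m.+1) => [y|]; last by apply: box.
  by apply: (param false _ y wm) => n [->]; apply: IHm; rewrite -(nboxes_param wm).
Qed.

Lemma stay_refuted q q' m : w m = None -> ostep A V (q, nboxes w m) (q', nboxes w m) ->
  [/\ inT q q', stay_ok (m == 0) (trans_op q q')
    & dual_sat refuted m (test_formula (trans_op q q'))].
Proof.
move=> wm st; have [T_qq' ok _ _] := ostep_stay_ok wm st; split => //.
exact/(test_formula_iff wm reads_params_refuted T_qq' ok).
Qed.

Lemma nested_refuted b q p f c :
  nested_path A F V b q p f c -> obligation_refuted (oNested q p f b) c.
Proof.
elim=> {q p f c} [q c|q q' p f f' c st mon flag _ IH|
                  q q1 q2 q3 p f f1 f2 c up down flag _ IH1 _ IH2];
  apply: obligation_refuted_of_box => m wm lvl_m /=.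
- by left; apply/dual_sat_nil.
- right; left; apply/dual_sat_stay; exists q', f'; rewrite -lvl_m in st.
  have [T_qq' ok test] := stay_refuted wm st; rewrite T_qq' ok mon flag; split => //.
  by apply: (IH m).1; rewrite next_box_level_box.
- right; right; apply/dual_sat_up; exists q1, q2, q3, f1, f2.
  have [T1 inc] := (ostep_inc_iff _ _ _).1 up; have [T3 dec] := (ostep_dec_iff _ _ _).1 down.
  rewrite /up_ok T1 inc T3 dec flag; split => //.
  + by apply: (IH1 m.+1).1; rewrite next_box_level_succ lvl_m.
  + by apply: (IH2 m).1; rewrite next_box_level_box.
Qed.

Lemma monotone_refuted q p f c : monotone_path A F V q p f c -> obligation_refuted (oMono q p f) c.
Proof.
elim=> {q p f c} [q c|q q' p f f' c st mon flag _ IH|q q1 q2 q3 p f f1 f2 c up down flag np _ IH2|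
                  q q1 p f f1 c up flag _ IH];
  apply: obligation_refuted_of_box => m wm lvl_m /=.
- by left; apply/dual_sat_nil.
- right; left; apply/dual_sat_stay; exists q', f'; rewrite -lvl_m in st.
  have [T_qq' ok test] := stay_refuted wm st; rewrite T_qq' ok mon flag; split => //.
  by apply: (IH m).1; rewrite next_box_level_box.
- right; right; left; apply/dual_sat_up; exists q1, q2, q3, f1, f2.
  have [T1 inc] := (ostep_inc_iff _ _ _).1 up; have [T3 dec] := (ostep_dec_iff _ _ _).1 down.
  rewrite /up_ok T1 inc T3 dec flag; split => //.
  + by apply: (nested_refuted np m.+1).1; rewrite next_box_level_succ lvl_m.
  + by apply: (IH2 m).1; rewrite next_box_level_box.
- right; right; right; apply/dual_sat_move; exists q1, f1.
  have [T1 inc] := (ostep_inc_iff _ _ _).1 up; rewrite T1 inc flag; split => // _ ->.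
  by apply: (IH m.+1).1; rewrite next_box_level_succ lvl_m.
Qed.

Lemma buchi_refuted q c : buchi_witness A F V q c -> obligation_refuted (oBuchi q) c.
Proof.
elim=> {q c} [q c /nested_refuted IH|q c /monotone_refuted IH|q q' c c' st _ IH];
  apply: obligation_refuted_of_box => m wm lvl_m /=.
- by left => _ ->; apply: (IH m).1; rewrite next_box_level_box.
- by right; left => _ ->; apply: (IH m).1; rewrite next_box_level_box.
right; right; case: (ostep_level st) => lvl'; [subst c'..|].
- left; apply/dual_sat_stay; exists q', false; rewrite -lvl_m in st.
  have [T_qq' ok test] := stay_refuted wm st; rewrite T_qq' ok; split => //.
  by apply: (IH m).1; rewrite next_box_level_box.
- right; left; apply/dual_sat_move; exists q', false.
  have [T_qq' inc] := (ostep_inc_iff _ _ _).1 st; rewrite T_qq' inc; split => // _ ->.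
  by apply: (IH m.+1).1; rewrite next_box_level_succ lvl_m.
- right; right; move: st; rewrite lvl' => /(ostep_dec_iff _ _ _) [T_qq' dec].
  case: (posnP m) lvl_m => [->|m_pos lvl_m]; first by rewrite nboxes0 lvl'.
  apply/dual_sat_move; exists q', false; rewrite T_qq' dec; split => // n n_m.
  by apply: (IH n).2; apply/eq_add_S; rewrite -lvl' -lvl_m (nboxes_pred wm m_pos) -n_m.
Qed.

Lemma refuted_iff_buchi : refuted (a_init T) 0 <-> buchi_witness A F V q0 0.
Proof.
have lvl0 : next_box_level w 0 = 0 by rewrite next_box_level_box ?param_word0 ?nboxes0.
split => [/refuted_fact|/buchi_refuted/(_ 0) [ref _]]; last exact: ref.
by rewrite /fact encodeK lvl0.
Qed.

End AutomatonCorrectness.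

(** * Size *)

Lemma sum_InSeq_bound (I : Type) (s : seq I) (f : I -> nat) b :
  (forall i, InSeq i s -> f i <= b) -> \sum_(i <- s) f i <= size s * b.
Proof.
elim: s => [|i s IHs] f_le; first by rewrite big_nil.
rewrite big_cons mulSn leq_add ?f_le //=; first by left.
by apply: IHs => j sj; apply: f_le; right.
Qed.

Section AutomatonSize.
Variables (Q X : finType) (A : ocapt Q X) (F : {set Q}).

Local Notation formula := (bform 'I_(nstates Q X)).

Lemma test_formula_size (o : op X) : bform_size (test_formula o : formula) <= 3.
Proof. by case: o. Qed.

Lemma stay_formula_size z q f cond next :
  bform_size (stay_formula A F z q f cond next) <= 12 * #|Q| + 1.
Proof.
apply: leq_trans (bigAnd_size (b := 5) _) _; last by rewrite card_prod card_bool; lia.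
by move=> [q' f']; case: ifP => // _ /=; have := test_formula_size (odelta A (q, q')); lia.
Qed.

Lemma move_formula_size q f cond d md next :
  bform_size (move_formula A F q f cond d md next) <= 4 * #|Q| + 1.
Proof.
apply: leq_trans (bigAnd_size (b := 1) _) _; last by rewrite card_prod card_bool; lia.
by move=> t; case: ifP.
Qed.

Lemma up_formula_size q f inner after :
  bform_size (up_formula A F q f inner after) <= 16 * #|Q| ^ 3 + 1.
Proof.
apply: leq_trans (bigAnd_size (b := 3) _) _; last by rewrite !card_prod card_bool; lia.
by move=> [[[[q1 q2] q3] f1] f2]; case: ifP.
Qed.

Lemma box_formula_size k z : bform_size (box_formula A F k z) <= 16 * #|Q| ^ 3 + 20 * #|Q| + 9.
Proof.
have nil_size q p f : bform_size (nil_formula q p f : formula) <= 1.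
  by rewrite /nil_formula; case: ifP.
case: k => [[q|[[[q p] f] b]]|[[q p] f]] /=.
- set n1 := bform_size (stay_formula _ _ _ _ _ _ _).
  set n2 := bform_size (move_formula _ _ _ _ _ DRight _ _).
  have : n1 <= 12 * #|Q| + 1 by apply: stay_formula_size.
  have : n2 <= 4 * #|Q| + 1 by apply: move_formula_size.
  set n3 := bform_size (if z then _ else _).
  have : n3 <= 4 * #|Q| + 1.
    by rewrite /n3; case: (z); [rewrite addn1 | apply: move_formula_size].
  clearbody n1 n2 n3; move: (#|Q| ^ 3) (#|Q|) => cube nQ; lia.
- set n1 := bform_size (nil_formula _ _ _); set n2 := bform_size (stay_formula _ _ _ _ _ _ _).
  set n3 := bform_size (up_formula _ _ _ _ _ _).
  have : n1 <= 1 by apply: nil_size.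
  have : n2 <= 12 * #|Q| + 1 by apply: stay_formula_size.
  have : n3 <= 16 * #|Q| ^ 3 + 1 by apply: up_formula_size.
  clearbody n1 n2 n3; move: (#|Q| ^ 3) (#|Q|) => cube nQ; lia.
- set n1 := bform_size (nil_formula _ _ _); set n2 := bform_size (stay_formula _ _ _ _ _ _ _).
  set n3 := bform_size (up_formula _ _ _ _ _ _).
  set n4 := bform_size (move_formula _ _ _ _ _ _ _ _).
  have : n1 <= 1 by apply: nil_size.
  have : n2 <= 12 * #|Q| + 1 by apply: stay_formula_size.
  have : n3 <= 16 * #|Q| ^ 3 + 1 by apply: up_formula_size.
  have : n4 <= 4 * #|Q| + 1 by apply: move_formula_size.
  clearbody n1 n2 n3 n4; move: (#|Q| ^ 3) (#|Q|) => cube nQ; lia.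
Qed.

Lemma transition_formula_size s l :
  bform_size (transition_formula A F s l) <= 16 * #|Q| ^ 3 + 20 * #|Q| + 11.
Proof.
have small (g : formula) : bform_size g <= 1 -> bform_size g <= 16 * #|Q| ^ 3 + 20 * #|Q| + 11.
  by move/leq_trans; apply; rewrite addnS.
case: s => [[[k md]|[x|x]]|[]] /=.
- have := box_formula_size k false; have := box_formula_size k true.
  by case: l => [[y|]|] /=; move: (#|Q| ^ 3) (#|Q|) => cube nQ; lia.
- by case: l => [[y|]|]; apply: small => //=; case: eqP.
- by case: l => [[y|]|]; apply: small => //=; case: eqP.
- by case: l => [[y|]|]; rewrite /= addnS.
Qed.

Lemma nstates_card :
  nstates Q X = (#|Q| + #|Q| * #|Q| * 2 * 2 + #|Q| * #|Q| * 2) * 2 + (#|X| + #|X|) + 1.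
Proof. by rewrite /nstates !card_sum !card_prod !card_sum !card_prod card_bool card_unit. Qed.

Lemma ocapt_a2a_size_card q0 : a2a_size (ocapt_a2a A F q0) <=
  nstates Q X + nstates Q X * #|X|.+2 * (16 * #|Q| ^ 3 + 20 * #|Q| + 12).
Proof.
rewrite /a2a_size card_ord leq_add2l.
have -> : nstates Q X * #|X|.+2 = size (a_delta (ocapt_a2a A F q0)).
  by rewrite size_allpairs size_enum_ord /labels /= size_map -cardE.
apply: sum_InSeq_bound => t /InSeq_transitions [i [l ->]] /=.
by rewrite addnS ltnS transition_formula_size.
Qed.

Lemma ocapt_size_gt0 (q0 : Q) : 0 < ocapt_size A.
Proof. by rewrite /ocapt_size -addnA addn_gt0; apply/orP; left; apply/card_gt0P; exists q0. Qed.

Lemma ocapt_a2a_size q0 : a2a_size (ocapt_a2a A F q0) <= 2465 * ocapt_size A ^ 6.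
Proof.
apply: leq_trans (ocapt_a2a_size_card q0) _; rewrite nstates_card.
have le_QN : #|Q| <= ocapt_size A by rewrite /ocapt_size -addnA leq_addr.
have le_XN : #|X| <= ocapt_size A by rewrite /ocapt_size leq_addl.
move: (ocapt_size A) (#|Q|) (#|X|) le_QN le_XN (ocapt_size_gt0 q0) => N q x le_qN le_xN N_pos.
have le_states : (q + q * q * 2 * 2 + q * q * 2) * 2 + (x + x) + 1 <= 17 * N ^ 2 by nia.
have le_labels : x.+2 <= 3 * N by lia.
have le_formula : 16 * q ^ 3 + 20 * q + 12 <= 48 * N ^ 3.
  have : q ^ 3 <= N ^ 3 by rewrite leq_exp2r.
  have : 1 <= N ^ 3 by rewrite expn_gt0 N_pos.
  have : q <= N ^ 3 by apply: leq_trans le_qN _; rewrite -{1}(expn1 N) leq_pexp2l.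
  lia.
apply: leq_trans (leq_add le_states (leq_mul (leq_mul le_states le_labels) le_formula)) _.
have : N ^ 2 <= N ^ 6 by rewrite leq_pexp2l.
rewrite (_ : 17 * N ^ 2 * (3 * N) * (48 * N ^ 3) = 2448 * N ^ 6); last first.
  by rewrite !expnS expn0; nia.
lia.
Qed.

End AutomatonSize.

Theorem proposition21 :
  exists c : nat,
  forall (Q X : finType) (A : ocapt Q X) (q0 : Q) (F : {set Q}),
  exists (n : nat) (T : a2a 'I_n X),
    a2a_size T <= c * (ocapt_size A) ^ c /\
    forall w : pword X, is_param_word w ->
      forall V : X -> nat, is_Vw w V ->
        (a2a_accepts T w <->
         forall r, inf_run A V q0 r -> visits_finitely F r).
Proof.
exists 2465 => Q X A q0 F; exists (nstates Q X), (ocapt_a2a A F q0); split.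
  apply: leq_trans (ocapt_a2a_size A F q0) _.
  by rewrite leq_mul2l leq_pexp2l ?(ocapt_size_gt0 A q0).
move=> w w_param V V_w.
rewrite accepts_iff_not_refuted // (refuted_iff_buchi A F q0 w_param V_w) -buchi_iff_witness.
split => [no_run r run_r|all_fin [r run_r]].
  by apply: NNPP => /not_visits_finitely infF; apply: no_run; exists r.
by move/not_visits_finitely; apply; apply: all_fin.
Qed.
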